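(* Let $A$ be a finite-dimensional semisimple associative algebra over $\mathbb{C}$, $G$ a finite group of automorphisms of $A$, and $M$ a finite-dimensional simple $A$-module with inertia subgroup $G_M$, isomorphisms $\phi(h)$ and 2-cocycle $\alpha_M$ as in the context. Then for every $\gamma\in J_{M,\alpha_M}$, the multiplicity space $M_\gamma$ is a simple $A^G$-module.
   Context: For an $A$-module $M$ and $h\in G$, ${}^hM$ denotes $M$ with $A$-action $a*_hm=h^{-1}(a)m$. The inertia subgroup is $G_M=\{h\in G: {}^hM\cong M \text{ as } A\text{-modules}\}$. For each $h\in G_M$ fix a linear bijection $\phi(h)$ of $M$ with $\phi(h)a=h(a)\phi(h)$ for all $a\in A$, $\phi(1)=1_M$; then $\phi(h)\phi(k)=\alpha_M(h,k)\phi(hk)$ for a 2-cocycle $\alpha_M$ (values roots of unity). $\mathbb{C}^{\alpha_M}[G_M]$ is the twisted group algebra with basis $\bar h$ and $\bar h\bar k=\alpha_M(h,k)\overline{hk}$; $M$ is a $\mathbb{C}^{\alpha_M}[G_M]$-module via $\bar h\mapsto\phi(h)$. $J_{M,\alpha_M}$ is the set of irreducible characters $\lambda$ of $\mathbb{C}^{\alpha_M}[G_M]$ whose simple module $W_\lambda$ occurs in $M$. Fixing a nonzero $w\in W_\lambda$, $M_\lambda=\{f(w): f\in\mathrm{Hom}_{\mathbb{C}^{\alpha_M}[G_M]}(W_\lambda,M)\}\subseteq M$, which is stable under $A^G=\{a\in A: g(a)=a\ \forall g\in G\}$. *)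

From HB Require Import structures.
From mathcomp Require Import all_boot all_order all_algebra all_fingroup all_field.
From mathcomp Require Export complex.
From mathcomp Require Export reals.
Set Implicit Arguments. Unset Strict Implicit. Unset Printing Implicit Defensive.
Import GRing.Theory.
Local Open Scope ring_scope.

Section Defs.
Variable C : fieldType.

Definition left_ideal (A : falgType C) (L : {vspace A}) : Prop :=
  forall a x : A, x \in L -> a * x \in L.

Definition semisimple_algebra (A : falgType C) : Prop :=
  forall L : {vspace A}, left_ideal L ->
    exists L' : {vspace A},
      [/\ left_ideal L', (L + L')%VS = fullv & (L :&: L')%VS = 0%VS].

Definition alg_automorphism (A : falgType C) (f : A -> A) : Prop :=
  [/\ forall (k : C) (a b : A), f (k *: a + b) = k *: f a + f b,
      f 1 = 1,
      forall a b : A, f (a * b) = f a * f b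
    & bijective f].

Definition aut_group_action (A : falgType C) (gT : finGroupType)
    (G : {group gT}) (sigma : gT -> A -> A) : Prop :=
  [/\ forall g, g \in G -> alg_automorphism (sigma g),
      forall g h a, g \in G -> h \in G -> sigma (g * h)%g a = sigma g (sigma h a)
    & forall g h, g \in G -> h \in G -> sigma g =1 sigma h -> g = h].

Definition invariant (A : falgType C) (gT : finGroupType) (G : {group gT})
    (sigma : gT -> A -> A) (a : A) : Prop :=
  forall g, g \in G -> sigma g a = a.

Definition is_module (A : falgType C) (M : vectType C) (act : A -> 'End(M)) : Prop :=
  [/\ forall (k : C) (a b : A), act (k *: a + b) = k *: act a + act b,
      act 1 = \1%VF
    & forall a b : A, act (a * b) = (act a \o act b)%VF].

Definition simple_module (A : falgType C) (M : vectType C) (act : A -> 'End(M)) : Prop :=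
  (0 < \dim (fullv : {vspace M}))%N /\
  forall U : {vspace M}, (forall a u, u \in U -> act a u \in U) ->
    U = 0%VS \/ U = fullv.

(* h is in the inertia subgroup G_M: h \in G and  ^hM ~= M  as A-modules,
   where ^hM is M with action  a *_h m = h^{-1}(a) m. *)
Definition in_inertia (A : falgType C) (gT : finGroupType) (G : {group gT})
    (sigma : gT -> A -> A) (M : vectType C) (act : A -> 'End(M)) (h : gT) : Prop :=
  h \in G /\
  exists f : 'End(M), bijective f /\
    forall (a : A) (m : M), f (act (sigma h^-1%g a) m) = act a (f m).

(* A (unital) module over C^alpha[G_M] on W: the basis element \bar h acts by
   psi h, for h in the subgroup described by the predicate GM. *)
Definition twisted_module (gT : finGroupType) (GM : gT -> Prop)
    (alpha : gT -> gT -> C) (W : vectType C) (psi : gT -> 'End(W)) : Prop :=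
  psi 1%g = \1%VF /\
  forall h k, GM h -> GM k -> (psi h \o psi k)%VF = alpha h k *: psi (h * k)%g.

Definition twisted_simple (gT : finGroupType) (GM : gT -> Prop)
    (W : vectType C) (psi : gT -> 'End(W)) : Prop :=
  (0 < \dim (fullv : {vspace W}))%N /\
  forall U : {vspace W}, (forall h u, GM h -> u \in U -> psi h u \in U) ->
    U = 0%VS \/ U = fullv.

Definition twisted_hom (gT : finGroupType) (GM : gT -> Prop)
    (W M : vectType C) (psi : gT -> 'End(W)) (phi : gT -> 'End(M))
    (f : 'Hom(W, M)) : Prop :=
  forall h (x : W), GM h -> f (psi h x) = phi h (f x).

(* M_lambda = { f(w) : f in Hom_{C^alpha[G_M]}(W_lambda, M) }. *)
Definition mult_space (gT : finGroupType) (GM : gT -> Prop)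
    (W M : vectType C) (psi : gT -> 'End(W)) (phi : gT -> 'End(M))
    (w : W) (m : M) : Prop :=
  exists f : 'Hom(W, M), twisted_hom GM psi phi f /\ f w = m.

Definition simple_invariant_submodule (A : falgType C) (gT : finGroupType)
    (G : {group gT}) (sigma : gT -> A -> A) (M : vectType C)
    (act : A -> 'End(M)) (P : M -> Prop) : Prop :=
  [/\ exists m, P m /\ m != 0,
      forall (k : C) (x y : M), P x -> P y -> P (k *: x + y),
      forall (a : A) (x : M), invariant G sigma a -> P x -> P (act a x)
    & forall U : {vspace M},
        (forall u, u \in U -> P u) ->
        (forall (a : A) u, invariant G sigma a -> u \in U -> act a u \in U) ->
        U = 0%VS \/ (forall m, P m -> m \in U)].

End Defs.

From Pilot Require Import Defs.
From HB Require Import structures.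
From mathcomp Require Import all_boot all_order all_algebra all_fingroup all_field.
From mathcomp Require Import complex reals.
From Stdlib Require Import Classical_Prop.
Import GRing.Theory.
Local Open Scope ring_scope.

(* Burnside's theorem makes the simple module [M] a quotient of [A] onto all of
   [End(M)].  Hence for [g] outside the
   inertia group [G_M] some [J] acts as the identity on [M] but as zero on the
   non-isomorphic twist [^gM].  If [f(w)] lies in a nonzero [A^G]-submodule [U]
   of [M_gamma] (with [f] injective) and [g(w)] is any other element of
   [M_gamma], choose [a1] acting as [g \o f^-1]: the average of [a1 * J] over
   [G] is [G]-invariant and acts on [f] as [|G_M| g], since the inertial terms
   transport [f] to [g] and the others vanish.  So [g(w)] lies in [U]. *)

Lemma linfunE_linear (K : fieldType) (aT rT : vectType K) (f : aT -> rT) :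
  (forall k x y, f (k *: x + y) = k *: f x + f y) -> linfun f =1 f.
Proof.
move=> fL; pose g : {linear aT -> rT} := HB.pack f (GRing.isLinear.Build _ _ _ _ f fL).
exact: (lfunE g).
Qed.

Section LineMaps.
Context {K : fieldType} {V : vectType K} {u : V}.

Let c (y : V) := coord [tuple u] ord0 y.

Let cK y : y \in <[u]>%VS -> y = c y *: u.
Proof.
by move=> yu; rewrite {1}(coord_span (X := [tuple u]) (v := y)) ?big_ord1 ?span_seq1.
Qed.

Lemma dim_leq_separating (Q : {vspace 'End(V)}) :
    (forall T x, T \in Q -> T x \in <[u]>%VS) ->
    (forall x, x != 0 -> exists2 T, T \in Q & T x != 0) ->
  (\dim {:V} <= \dim Q)%N.
Proof.
move=> Qu Qsep; pose k := \dim Q; pose q := vbasis Q.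
have qQ (i : 'I_k) : q`_i \in Q by apply/vbasis_mem/mem_nth; rewrite size_tuple.
pose ka := linfun (fun x : V => \row_(i < k) c (q`_i x)).
have kaE x : ka x = \row_(i < k) c (q`_i x).
  by apply: linfunE_linear => a y z; apply/rowP => i; rewrite /c !mxE !linearP.
have ka_inj : lker ka = 0%VS.
  apply/eqP; rewrite -subv0; apply/subvP => x; rewrite memv_ker memv0 => /eqP kx.
  apply: contraT => x0; have [T TQ /eqP[]] := Qsep x x0.
  rewrite (coord_vbasis TQ) sum_lfunE big1 // => i _.
  rewrite scale_lfunE (cK _ (Qu _ _ (qQ i))).
  have := congr1 (fun m : 'rV[K]_k => m 0 i) kx; rewrite kaE !mxE => ->.
  by rewrite scale0r scaler0.
rewrite -(limg_dim_eq (f := ka)) ?ka_inj ?capv0 //.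
by apply: leq_trans (dimvS (subvf _)) _; rewrite dimvf /dim /= mul1n.
Qed.

Lemma line_maps_mem (Q : {vspace 'End(V)}) :
    (forall T x, T \in Q -> T x \in <[u]>%VS) -> (\dim {:V} <= \dim Q)%N ->
  forall R : 'End(V), (forall x, R x \in <[u]>%VS) -> R \in Q.
Proof.
move=> Qu dimQ; pose n := \dim {:V}; pose e := vbasis {:V}.
pose mu := linfun (fun T : 'End(V) => \row_(j < n) c (T e`_j)).
have muE T : mu T = \row_(j < n) c (T e`_j).
  apply: linfunE_linear => a T1 T2; apply/rowP => j.
  by rewrite /c !mxE add_lfunE scale_lfunE linearP.
have mu_inj (T : 'End(V)) : (forall x, T x \in <[u]>%VS) -> mu T = 0 -> T = 0.
  move=> Tu mT; apply/lfunP => x.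
  rewrite zero_lfunE (coord_vbasis (memvf x)) linear_sum big1 // => j _.
  rewrite linearZ /= (cK _ (Tu _)).
  have := congr1 (fun m : 'rV[K]_n => m 0 j) mT; rewrite muE !mxE => ->.
  by rewrite scale0r scaler0.
have muQ : (mu @: Q)%VS = fullv.
  apply/eqP; rewrite eqEdim subvf dimvf /dim /= mul1n.
  rewrite limg_dim_eq //; apply/eqP; rewrite -subv0; apply/subvP => T.
  rewrite memv_cap memv_ker => /andP[TQ /eqP mT].
  by rewrite (mu_inj T (fun x => Qu T x TQ) mT) mem0v.
move=> R Ru; have /memv_imgP[T TQ muRT] : mu R \in (mu @: Q)%VS by rewrite muQ memvf.
suff -> : R = T by [].
apply/eqP; rewrite -subr_eq0; apply/eqP/mu_inj.
  by move=> x; rewrite add_lfunE opp_lfunE; apply: memvB; [exact: Ru | exact: Qu].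
by rewrite linearB /= muRT subrr.
Qed.

End LineMaps.

Section IrreducibleAlgebra.
Context {K : fieldType} {V : vectType K} {B : {vspace 'End(V)}}.
Hypothesis B1 : \1%VF \in B.
Hypothesis BM : forall f g, f \in B -> g \in B -> (f \o g)%VF \in B.
Hypothesis Birr : forall U : {vspace V},
  (forall f u, f \in B -> u \in U -> f u \in U) -> U = 0%VS \/ U = fullv.

Lemma orbit_full {v} : v != 0 -> forall x, exists2 b, b \in B & b v = x.
Proof.
move=> v0 x; pose ev : 'Hom('End(V), V) := linfun (fun b : 'End(V) => b v).
have evE b : ev b = b v.
  by apply: linfunE_linear => k b1 b2; rewrite add_lfunE scale_lfunE.
suff /memv_imgP[b bB ->] : x \in (ev @: B)%VS by exists b; rewrite ?evE.
have evB f y : f \in B -> y \in (ev @: B)%VS -> f y \in (ev @: B)%VS.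
  move=> fB /memv_imgP[b bB ->]; rewrite evE -comp_lfunE -evE.
  exact/memv_img/BM.
have [Bv0|->] := Birr _ evB; last by rewrite memvf.
have : v \in (ev @: B)%VS by rewrite -(id_lfunE v) -evE memv_img.
by rewrite Bv0 memv0 (negbTE v0).
Qed.

(* The maps [E \o b], [b \in B], land in [<[u]>] and separate points (by
   [orbit_full]), so they give every map into [<[u]>]; composing with [B] on
   the left then moves the line anywhere. *)
Lemma mem_of_line_map (E : 'End(V)) (u : V) :
  E \in B -> E != 0 -> (forall x, E x \in <[u]>%VS) -> forall T, T \in B.
Proof.
move=> EB /lfunPn[x0]; rewrite zero_lfunE => Ex0 Eu.
pose cmpE := linfun (fun b : 'End(V) => (E \o b)%VF); pose Q := (cmpE @: B)%VS.
have cmpEE b : cmpE b = (E \o b)%VF.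
  by apply: linfunE_linear => k b1 b2; rewrite comp_lfunDr comp_lfunZr.
have QB T : T \in Q -> exists2 b, b \in B & T = (E \o b)%VF.
  by case/memv_imgP=> b bB ->; exists b; rewrite ?cmpEE.
have Qu T x : T \in Q -> T x \in <[u]>%VS by case/QB=> b _ ->; rewrite comp_lfunE.
have dimQ : (\dim {:V} <= \dim Q)%N.
  apply: (dim_leq_separating Q Qu) => x x_neq0.
  have [b bB bx] := orbit_full x_neq0 x0.
  by exists (E \o b)%VF; rewrite ?comp_lfunE ?bx // -cmpEE memv_img.
have lineB (R : 'End(V)) : (forall x, R x \in <[u]>%VS) -> R \in B.
  by move=> Ru; have [b bB ->] := QB R (line_maps_mem Q Qu dimQ R Ru); exact: BM.
have u0 : u != 0 by apply: contraNneq Ex0 => u0; move: (Eu x0); rewrite u0 memv0.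
move=> T; pose e := vbasis {:V}.
have /fin_all_exists[b bP] (j : 'I_(\dim {:V})) : exists b, (b \in B) && (b u == e`_j).
  by have [b bB bu] := orbit_full u0 e`_j; exists b; rewrite bB bu eqxx.
pose R j := linfun (fun x : V => coord e j (T x) *: u).
have RE j x : R j x = coord e j (T x) *: u.
  by apply: linfunE_linear => a y z; rewrite !linearP /= scalerDl scalerA.
have -> : T = \sum_j (b j \o R j)%VF.
  apply/lfunP => x; rewrite sum_lfunE {1}(coord_vbasis (memvf (T x))).
  apply: eq_bigr => j _; rewrite comp_lfunE RE linearZ /=.
  by case/andP: (bP j) => _ /eqP ->.
apply: memv_suml => j _; apply: BM; first by case/andP: (bP j).
by apply: lineB => x; rewrite RE memvZ // memv_line.
Qed.

End IrreducibleAlgebra.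

Lemma stable_subspace_eigenvector {C : numClosedFieldType} {V : vectType C}
    (S : 'End(V)) (U : {vspace V}) :
  U != 0%VS -> (S @: U <= U)%VS ->
  exists v (l : C), [/\ v \in U, v != 0 & S v = l *: v].
Proof.
move=> U0 SU; have SUin u : u \in U -> S u \in U by move=> uU; exact/(subvP SU)/memv_img.
pose SU' : 'End(subvs_of U) := linfun (fun x => vsproj U (S (vsval x))).
have SU'E x : SU' x = vsproj U (S (vsval x)).
  by apply: linfunE_linear => k y z; rewrite !linearP.
have eb := vbasisP {:subvs_of U}.
have dimU : (0 < \dim {:subvs_of U})%N.
  by rewrite dimvf /dim /= lt0n dimv_eq0.
have [l Hl] := eigenvalue_closed (passmx.mxof (vbasis _) (vbasis _) SU') dimU.
have : passmx.leigenspace SU' l != 0%VS.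
  by rewrite (passmx.leigenspaceE eb) passmx.vsof_eq0.
rewrite -vpick0 => x0.
have := memv_pick (passmx.leigenspace SU' l); set x := vpick _ in x0 *.
rewrite memv_ker !lfunE /= !lfunE /= subr_eq0 SU'E => /eqP Sx.
exists (vsval x), l; split; first exact: subvsP.
  by apply: contraNneq x0 => /(congr1 (vsproj U)); rewrite vsvalK linear0 => ->.
by rewrite -(vsprojK (SUin _ (subvsP x))) Sx scale_lfunE id_lfunE linearZ.
Qed.

Section Burnside.
Context {C : numClosedFieldType} {V : vectType C} (B : {vspace 'End(V)}).
Hypothesis B1 : \1%VF \in B.
Hypothesis BM : forall f g, f \in B -> g \in B -> (f \o g)%VF \in B.
Hypothesis Birr : forall U : {vspace V},
  (forall f u, f \in B -> u \in U -> f u \in U) -> U = 0%VS \/ U = fullv.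

(* With [b (T x1) = x2] for [T x1, T x2] independent, [T \o b] stabilises
   [limg T]; subtracting an eigenvalue from it and composing with [T] yields a
   nonzero element of [B] killing an eigenvector in [limg T]. *)
Lemma rank_descent T : T \in B -> (1 < \dim (limg T))%N ->
  exists2 T', T' \in B & (T' != 0) && (\dim (limg T') < \dim (limg T))%N.
Proof.
move=> TB dT; have lT0 : limg T != 0%VS by rewrite -dimv_eq0 -lt0n (ltn_trans _ dT).
have /memv_imgP[x1 _ Tx1] := memv_pick (limg T).
have Tx1_neq0 : T x1 != 0 by rewrite -Tx1 vpick0.
have /subvPn[_ /memv_imgP[x2 _ ->] Tx2] : ~~ (limg T <= <[T x1]>)%VS.
  by apply: contraTN dT => /dimvS; rewrite dim_vline Tx1_neq0 -leqNgt.
have [b bB bx] := orbit_full B1 BM Birr Tx1_neq0 x2.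
pose S := (T \o b)%VF.
have SU : (S @: limg T <= limg T)%VS.
  by apply/subvP => _ /memv_imgP[z _ ->]; rewrite comp_lfunE memv_img ?memvf.
have [v [l [vT v0 Sv]]] := stable_subspace_eigenvector S (limg T) lT0 SU.
pose D := (S - l *: \1)%VF.
have DE y : D y = T (b y) - l *: y.
  by rewrite add_lfunE opp_lfunE scale_lfunE id_lfunE comp_lfunE.
exists (D \o T)%VF.
  by apply: BM => //; apply: memvB; [exact: BM | exact: memvZ].
apply/andP; split.
  apply/lfunPn; exists x1; rewrite zero_lfunE comp_lfunE DE bx subr_eq0.
  by apply: contra Tx2 => /eqP ->; rewrite memvZ // memv_line.
rewrite limg_comp -(limg_ker_dim D (limg T)) -[X in (X < _)%N]add0n ltn_add2r.
rewrite lt0n dimv_eq0; apply: contraNneq v0 => capT0.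
have : v \in (limg T :&: lker D)%VS.
  by move: Sv; rewrite memv_cap vT memv_ker DE comp_lfunE => ->; rewrite subrr eqxx.
by rewrite capT0 memv0.
Qed.

Lemma exists_rank_one T : T \in B -> T != 0 ->
  exists2 E, E \in B & \dim (limg E) = 1%N.
Proof.
have [n] := ubnP (\dim (limg T)); elim: n T => // n IH T dT TB T0.
have dT0 : (0 < \dim (limg T))%N.
  case/lfunPn: T0 => x; rewrite zero_lfunE lt0n dimv_eq0.
  by apply: contra => /eqP limgT0; rewrite -memv0 -limgT0 memv_img ?memvf.
case: (ltngtP (\dim (limg T)) 1) => [|dT1|]; last by exists T.
  by rewrite ltnNge dT0.
have [T' T'B /andP[T'0 dT']] := rank_descent _ TB dT1.
exact: (IH T' (leq_trans dT' dT)).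
Qed.

Theorem burnside T : T \in B.
Proof.
have [id0|id_neq0] := eqVneq (\1%VF : 'End(V)) 0.
  by rewrite -[T]comp_lfun1r id0 comp_lfun0r mem0v.
have [E EB dE] := exists_rank_one _ B1 id_neq0.
have E0 : E != 0 by apply/eqP => E0; move: dE; rewrite E0 lim0g dimv0.
pose u := vpick (limg E).
have limgE : limg E = <[u]>%VS.
  apply/eqP; rewrite eq_sym eqEdim dim_vline vpick0 -dimv_eq0 dE leqnn andbT.
  by rewrite -memvE memv_pick.
apply: (mem_of_line_map B1 BM Birr E u EB E0) => x.
by rewrite -limgE memv_img ?memvf.
Qed.

End Burnside.

Lemma lfun_ideal_eq1 {K : fieldType} {V : vectType K} (X : 'End(V)) : X != 0 ->
  exists n (R S : 'I_n -> 'End(V)), \sum_(i < n) (R i \o X \o S i)%VF = \1%VF.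
Proof.
case/lfunPn => x; rewrite zero_lfunE; set y := X x => y0.
pose e := vbasis {:V}.
have [i0 ci0] : exists i0, coord e i0 y != 0.
  apply/existsP; apply: contraR y0 => /existsPn cy0.
  rewrite (coord_vbasis (memvf y)) big1 // => i _.
  by move/negPn/eqP: (cy0 i) => ->; rewrite scale0r.
pose l z := coord e i0 z / coord e i0 y.
pose S j := linfun (fun z : V => coord e j z *: x).
pose R j := linfun (fun z : V => l z *: e`_j).
have SE j z : S j z = coord e j z *: x.
  by apply: linfunE_linear => a z1 z2; rewrite linearP scalerDl scalerA.
have RE j z : R j z = l z *: e`_j.
  by apply: linfunE_linear => a z1 z2; rewrite /l linearP mulrDl -mulrA scalerDl scalerA.
exists (\dim {:V}), R, S; apply/lfunP => z.
rewrite sum_lfunE id_lfunE [RHS](coord_vbasis (memvf z)); apply: eq_bigr => j _.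
by rewrite !comp_lfunE SE linearZ /= RE /l linearZ /= -mulrA divff // mulr1.
Qed.

Section ModuleActions.
Context {K : fieldType} {A : falgType K} {M : vectType K}.
Implicit Types rho : A -> 'End(M).

Lemma module_actE {rho} : is_module rho -> linfun rho =1 rho.
Proof. by case=> rhoL _ _; apply: linfunE_linear. Qed.

Lemma module_ideal_eq1 {rho} : is_module rho -> (forall T, exists a, rho a = T) ->
  forall a, rho a != 0 ->
  exists n (r q : 'I_n -> A), rho (\sum_(i < n) r i * a * q i) = \1%VF.
Proof.
move=> rhoM rho_surj a /lfun_ideal_eq1[n [R [S RaS]]].
have [r rR] := fin_all_exists (fun i => rho_surj (R i)).
have [q qS] := fin_all_exists (fun i => rho_surj (S i)).
case: (rhoM) => _ _ rhoMul; exists n, r, q.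
rewrite -module_actE // linear_sum -RaS; apply: eq_bigr => i _ /=.
by rewrite module_actE // !rhoMul rR qS.
Qed.

Lemma module_act_eq {rho rho'} : is_module rho -> is_module rho' ->
    (forall a, rho a = 0 -> rho' a = 0) ->
  forall a b, rho a = rho b -> rho' a = rho' b.
Proof.
move=> rhoM rho'M ker_sub a b eq_ab; apply/eqP.
rewrite -subr_eq0 -!(module_actE rho'M) -linearB /= module_actE // ker_sub //.
by rewrite -module_actE // linearB /= !module_actE // eq_ab subrr.
Qed.

Lemma module_act_neq0 {rho rho'} :
    is_module rho -> is_module rho' -> (forall T, exists a, rho a = T) ->
    (0 < \dim {:M})%N -> (forall a, rho a = 0 -> rho' a = 0) ->
  forall a, rho a != 0 -> rho' a != 0.
Proof.
move=> rhoM rho'M rho_surj dimM ker_sub a.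
case/(module_ideal_eq1 rhoM rho_surj)=> n [r [q rq1]].
case: (rhoM) (rho'M) => _ rho1 _ [_ rho'1 rho'Mul].
have := module_act_eq rhoM rho'M ker_sub _ _ (etrans rq1 (esym rho1)).
rewrite rho'1 -(module_actE rho'M) linear_sum => id_sum; apply/eqP => rho'a0.
have /lfunP/(_ (vpick {:M})) : \1%VF = 0 :> 'End(M).
  rewrite -id_sum big1 // => i _ /=.
  by rewrite module_actE // !rho'Mul rho'a0 comp_lfun0r comp_lfun0l.
rewrite id_lfunE zero_lfunE => /eqP; rewrite vpick0 -dimv_eq0 => /eqP dim0.
by rewrite dim0 in dimM.
Qed.

(* The intertwiner is [x |-> rho' (c (rank-one map onto x)) n0], where [c] is a
   linear section of [rho] and [n0] lies in the image of the idempotent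
   [rho' a0], [rho a0] being the rank-one projection onto [e0]. *)
Lemma module_intertwiner {rho rho'} :
    is_module rho -> is_module rho' -> (forall T, exists a, rho a = T) ->
    (0 < \dim {:M})%N -> (forall a, rho a = 0 -> rho' a = 0) ->
  exists2 F : 'End(M), F != 0 & forall a m, F (rho a m) = rho' a (F m).
Proof.
move=> rhoM rho'M rho_surj dimM ker_sub.
have wd := module_act_eq rhoM rho'M ker_sub; have rhoE := module_actE rhoM.
case: (rhoM) (rho'M) => _ _ rhoMul [rho'lin _ rho'Mul].
pose e := vbasis {:M}; pose e0 := e`_(Ordinal dimM).
have ce0 : coord e (Ordinal dimM) e0 = 1.
  by rewrite coord_free ?eqxx // (basis_free (vbasisP _)).
pose Q (x : M) := linfun (fun z : M => coord e (Ordinal dimM) z *: x).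
have QE x z : Q x z = coord e (Ordinal dimM) z *: x.
  by apply: linfunE_linear => a z1 z2; rewrite linearP scalerDl scalerA.
have QL : linfun Q =1 Q.
  apply: linfunE_linear => k x y; apply/lfunP => z.
  by rewrite add_lfunE scale_lfunE !QE scalerDr !scalerA mulrC.
have QT (T : 'End(M)) x : Q (T x) = (T \o Q x)%VF.
  by apply/lfunP => z; rewrite comp_lfunE !QE linearZ.
pose c := ((linfun rho)^-1)%VF.
have cK T : rho (c T) = T.
  have [a <-] := rho_surj T.
  by rewrite -rhoE limg_lfunVK // -rhoE memv_img ?memvf.
have [a0 a0P] := rho_surj (Q e0).
have rho_a0 : rho a0 != 0.
  apply/lfunPn; exists e0; rewrite a0P QE ce0 scale1r zero_lfunE.
  by apply/eqP => e0_0; move: ce0; rewrite e0_0 linear0 => /eqP; rewrite eq_sym oner_eq0.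
have /lfunPn[m0] := module_act_neq0 rhoM rho'M rho_surj dimM ker_sub _ rho_a0.
rewrite zero_lfunE => n0_neq0.
pose F := linfun (fun x => rho' (c (Q x)) (rho' a0 m0)).
have FE x : F x = rho' (c (Q x)) (rho' a0 m0).
  apply: linfunE_linear => k x1 x2.
  by rewrite -!QL linearP /= linearP /= rho'lin add_lfunE scale_lfunE.
exists F.
  apply/lfunPn; exists e0; rewrite FE zero_lfunE -comp_lfunE -rho'Mul.
  suff -> : rho' (c (Q e0) * a0) = rho' a0 by [].
  by apply: wd; rewrite rhoMul cK a0P -QT QE ce0 scale1r.
move=> a m; rewrite !FE -[RHS]comp_lfunE -rho'Mul; congr (fun_of_lfun _ _).
by apply: wd; rewrite rhoMul !cK QT.
Qed.

Lemma intertwiner_lker0 {rho rho'} {F : 'End(M)} :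
    simple_module rho -> F != 0 -> (forall a m, F (rho a m) = rho' a (F m)) ->
  lker F == 0%VS.
Proof.
case=> _ rho_irr F0 FE.
have kerF_stable a u : u \in lker F -> rho a u \in lker F.
  by rewrite !memv_ker FE => /eqP ->; rewrite linear0.
have [-> //|kerF_full] := rho_irr _ kerF_stable.
case/lfunPn: F0 => m; rewrite zero_lfunE.
by have := memvf m; rewrite -kerF_full memv_ker => ->.
Qed.

End ModuleActions.

Section SimpleModule.
Context {K : numClosedFieldType} {A : falgType K} {M : vectType K}.
Context {act : A -> 'End(M)}.
Hypotheses (actM : is_module act) (act_simple : simple_module act).

Lemma module_act_surj T : exists a, act a = T.
Proof.
have actE := module_actE actM; case: actM act_simple => _ act1 actMul [_ act_irr].
suff /memv_imgP[a _ ->] : T \in limg (linfun act) by exists a.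
have act_limg a : act a \in limg (linfun act) by rewrite -actE memv_img ?memvf.
apply: burnside => [|f g|U U_stable]; first by rewrite -act1.
  by case/memv_imgP=> a _ -> /memv_imgP[b _ ->]; rewrite !actE -actMul.
by apply: act_irr => a u; apply: U_stable.
Qed.

Lemma twist_kill_or_iso {s t : A -> A} : alg_automorphism s -> cancel t s ->
  (exists j, act j = \1%VF /\ act (s j) = 0) \/
  (exists f : 'End(M), bijective f /\ forall a m, f (act (t a) m) = act a (f m)).
Proof.
case=> slin s1 sMul _ st.
case: (actM) => actlin act1 actMul.
pose rho a := act (s a).
have rhoM : is_module rho.
  by split=> [k a b||a b]; rewrite /rho ?slin ?actlin ?s1 ?act1 ?sMul ?actMul.
have rho_surj T : exists a, rho a = T.
  by have [a <-] := module_act_surj T; exists (t a); rewrite /rho st.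
have [[k [sk0 k0]]|ker_sub] := classic (exists k, rho k = 0 /\ act k != 0).
  left; rewrite /rho in sk0.
  have [n [r [q rq1]]] := module_ideal_eq1 actM module_act_surj _ k0.
  exists (\sum_(i < n) r i * k * q i); split => //.
  rewrite -[act _]/(rho _) -(module_actE rhoM) linear_sum big1 // => i _ /=.
  by rewrite module_actE // /rho !sMul !actMul sk0 comp_lfun0r comp_lfun0l.
have rho_ker a : rho a = 0 -> act a = 0.
  by move=> rho_a0; apply/eqP; apply: contraT => a0; case: ker_sub; exists a.
case: act_simple => dimM act_irr.
have [F F0 FE] := module_intertwiner rhoM actM rho_surj dimM rho_ker.
have rho_simple : simple_module rho.
  split=> // U U_stable; apply: act_irr => a u uU.
  by rewrite -(st a); apply: U_stable.
have kerF := intertwiner_lker0 rho_simple F0 FE.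
right; exists (F^-1)%VF; split.
  by exists F; [exact: lker0_lfunVK kerF | exact: lker0_lfunK kerF].
move=> a m; apply: (lker0P kerF); rewrite lker0_lfunVK //.
by rewrite -{1}(lker0_lfunVK kerF m) -FE /rho st.
Qed.

End SimpleModule.

Section Inertia.
Context {K : numClosedFieldType} {A : falgType K} {gT : finGroupType}.
Context {G : {group gT}} {sigma : gT -> A -> A}.
Hypothesis HG : aut_group_action G sigma.
Context {M : vectType K} {act : A -> 'End(M)}.
Hypotheses (actM : is_module act) (act_simple : simple_module act).

Let GM := in_inertia G sigma act.

Lemma sigma1 a : sigma 1%g a = a.
Proof.
case: HG => aut sigmaM _; case: (aut 1%g (group1 G)) => _ _ _ /bij_inj; apply.
by rewrite -sigmaM ?group1 // mulg1.
Qed.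

Lemma sigmaKV g : g \in G -> cancel (sigma g^-1%g) (sigma g).
Proof. by case: HG => _ sigmaM _ gG a; rewrite -sigmaM ?groupV // mulgV sigma1. Qed.

Lemma inertiaV h : GM h -> GM h^-1%g.
Proof.
case=> hG [f [/bij_inj/lker0P kerf fE]]; split; first by rewrite groupV.
exists (f^-1)%VF; split.
  by exists f; [exact: lker0_lfunVK kerf | exact: lker0_lfunK kerf].
move=> a m; rewrite invgK; apply: (lker0P kerf); rewrite lker0_lfunVK //.
have sigmaK : cancel (sigma h) (sigma h^-1%g).
  by move=> b; rewrite -{2}[h]invgK sigmaKV ?groupV.
by have := fE (sigma h a) (f^-1%VF m); rewrite sigmaK lker0_lfunVK // => ->.
Qed.

Lemma noninertia_kill g : g \in G -> ~ GM g ->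
  exists j, act j = \1%VF /\ act (sigma g j) = 0.
Proof.
move=> gG not_GMg; case: HG => aut _ _.
case: (twist_kill_or_iso actM act_simple (aut g gG) (sigmaKV g gG)) => // iso.
by case: not_GMg; split.
Qed.

Lemma noninertia_separator : exists J, act J = \1%VF /\
  forall g, g \in G -> ~ GM g -> act (sigma g J) = 0.
Proof.
case: HG actM => aut _ _ [_ act1 actMul].
suff [J [J1 J0]] : exists J, act J = \1%VF /\
    forall g, g \in enum G -> g \in G -> ~ GM g -> act (sigma g J) = 0.
  by exists J; split=> // g gG; apply: J0; rewrite ?mem_enum.
elim: (enum G) => [|x s [J [J1 J0]]]; first by exists 1; split.
have [[xG not_GMx]|GMx] := classic (x \in G /\ ~ GM x).
  have [j [j1 j0]] := noninertia_kill x xG not_GMx.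
  exists (J * j); split; first by rewrite actMul J1 j1 comp_lfun1l.
  move=> g gxs gG not_GMg; case: (aut g gG) => _ _ sigmaMul _.
  rewrite sigmaMul actMul; case/predU1P: gxs => [-> | gs].
    by rewrite j0 comp_lfun0r.
  by rewrite J0 ?comp_lfun0l.
exists J; split=> // g; rewrite in_cons => /predU1P[->|gs]; last exact: J0.
by move=> xG not_GMx; case: GMx.
Qed.

Lemma reynolds_invariant (a : A) : Defs.invariant G sigma (\sum_(x in G) sigma x a).
Proof.
case: HG => aut sigmaM _ k kG.
have sigmaE g : g \in G -> linfun (sigma g) =1 sigma g.
  by move=> gG; apply: linfunE_linear; case: (aut g gG).
rewrite -sigmaE // linear_sum [RHS](reindex_inj (mulgI k)) /=.
by apply: eq_big => [x|x xG]; rewrite ?groupMl // sigmaE ?sigmaM.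
Qed.

Section Multiplicity.
Context {phi : gT -> 'End(M)}.
Hypothesis phiP : forall h, GM h -> bijective (phi h) /\
  forall (a : A) (m : M), phi h (act a m) = act (sigma h a) (phi h m).
Hypothesis phi1 : phi 1%g = \1%VF.
Context {alpha : gT -> gT -> K}.
Hypothesis phiM : forall h k, GM h -> GM k ->
  (phi h \o phi k)%VF = alpha h k *: phi (h * k)%g.
Context {W : vectType K} {psi : gT -> 'End(W)}.
Hypothesis psiM : twisted_module GM alpha psi.
Hypothesis W_simple : twisted_simple GM psi.

Let is_twisted_hom := twisted_hom GM psi phi.

Lemma alpha_inv_neq0 x : GM x -> alpha x x^-1%g != 0.
Proof.
move=> GMx; case: act_simple => dimM _.
have /bij_inj inj_x := proj1 (phiP _ GMx).
have /bij_inj inj_xV := proj1 (phiP _ (inertiaV _ GMx)).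
apply/eqP => alpha0; have /lfunP/(_ (vpick {:M})) := phiM _ _ GMx (inertiaV _ GMx).
rewrite mulgV phi1 alpha0 scale0r comp_lfunE zero_lfunE -(linear0 (phi x)).
move/inj_x; rewrite -(linear0 (phi x^-1%g)) => /inj_xV /eqP.
by rewrite vpick0 -dimv_eq0 => /eqP dim0; rewrite dim0 in dimM.
Qed.

Lemma psi_surj {x} : GM x -> forall z, exists z', psi x z' = z.
Proof.
move=> GMx z; exists (psi x^-1%g ((alpha x x^-1%g)^-1 *: z)).
case: psiM => psi1 psiMul.
rewrite -comp_lfunE (psiMul _ _ GMx (inertiaV _ GMx)) mulgV psi1.
by rewrite scale_lfunE id_lfunE scalerA divff ?alpha_inv_neq0 ?scale1r.
Qed.

Lemma twisted_hom_act {f : 'Hom(W, M)} {a} :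
  Defs.invariant G sigma a -> is_twisted_hom f -> is_twisted_hom (act a \o f).
Proof.
move=> inv_a fhom h z GMh.
by rewrite !comp_lfunE fhom // (proj2 (phiP _ GMh)) inv_a //; case: GMh.
Qed.

Lemma twisted_hom_lker0 {f : 'Hom(W, M)} {w} :
  is_twisted_hom f -> f w != 0 -> lker f == 0%VS.
Proof.
move=> fhom fw0; have kerf_stable h z : GM h -> z \in lker f -> psi h z \in lker f.
  by move=> GMh; rewrite !memv_ker fhom // => /eqP ->; rewrite linear0.
case: W_simple => _ /(_ _ kerf_stable) [-> // | kerf_full].
by move: fw0; rewrite -memv_ker kerf_full memvf.
Qed.

Lemma inertia_transport {f g : 'Hom(W, M)} {a x} :
    is_twisted_hom f -> is_twisted_hom g -> GM x ->
  (act a \o f)%VF = g -> (act (sigma x a) \o f)%VF = g.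
Proof.
move=> fhom ghom GMx afg; apply/lfunP => z; have [z' <-] := psi_surj GMx z.
by rewrite comp_lfunE fhom // -(proj2 (phiP _ GMx)) -[act a _]comp_lfunE afg ghom.
Qed.

Lemma averaged_transport {f g : 'Hom(W, M)} :
    is_twisted_hom f -> is_twisted_hom g -> lker f == 0%VS ->
  exists a (N : nat), Defs.invariant G sigma a /\ (act a \o f)%VF = N.+1%:R *: g.
Proof.
move=> fhom ghom kerf; case: (actM) => _ _ actMul.
have [a1 a1P] := module_act_surj actM act_simple (g \o f^-1)%VF.
have [J [J1 J0]] := noninertia_separator.
pose a2 := a1 * J.
have a2fg : (act a2 \o f)%VF = g.
  apply/lfunP => z; rewrite comp_lfunE actMul J1 comp_lfun1r a1P comp_lfunE.
  by rewrite lker0_lfunK.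
exists (\sum_(x in G) sigma x a2).
have -> : (act (\sum_(x in G) sigma x a2) \o f)%VF =
          \sum_(x in G) (act (sigma x a2) \o f)%VF.
  apply/lfunP => z; rewrite comp_lfunE -module_actE // linear_sum !sum_lfunE.
  by apply: eq_bigr => x _ /=; rewrite comp_lfunE module_actE.
have [N sumN] : exists N : nat,
    \sum_(x in G | x != 1%g) (act (sigma x a2) \o f)%VF = N%:R *: g.
  apply: (big_ind (fun T => exists N : nat, T = N%:R *: g)).
  - by exists 0%N; rewrite scale0r.
  - by move=> _ _ [N1 ->] [N2 ->]; exists (N1 + N2)%N; rewrite natrD scalerDl.
  - move=> x /andP[xG _]; have [GMx|not_GMx] := classic (GM x).
      by exists 1%N; rewrite scale1r (inertia_transport fhom ghom GMx a2fg).
    case: HG => aut _ _; case: (aut x xG) => _ _ sigmaMul _.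
    exists 0%N; rewrite scale0r sigmaMul actMul J0 //.
    by rewrite comp_lfun0r comp_lfun0l.
exists N; split; first exact: reynolds_invariant.
rewrite (bigD1 1%g) ?group1 //= sigma1 a2fg sumN.
by rewrite -natr1 scalerDl scale1r addrC.
Qed.

End Multiplicity.

End Inertia.

Theorem theorem3p5
  (R : realType)
  (A : falgType R[i]) (HA : semisimple_algebra A)
  (gT : finGroupType) (G : {group gT}) (sigma : gT -> A -> A)
  (HG : aut_group_action G sigma)
  (M : vectType R[i]) (act : A -> 'End(M))
  (Hmod : is_module act) (Hsimple : simple_module act)
  (phi : gT -> 'End(M))
  (Hphi : forall h, in_inertia G sigma act h ->
     bijective (phi h) /\
     forall (a : A) (m : M), phi h (act a m) = act (sigma h a) (phi h m))
  (Hphi1 : phi 1%g = \1%VF)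
  (alpha : gT -> gT -> R[i])
  (Halpha : forall h k, in_inertia G sigma act h -> in_inertia G sigma act k ->
     (phi h \o phi k)%VF = alpha h k *: phi (h * k)%g)
  (W : vectType R[i]) (psi : gT -> 'End(W))
  (HW : twisted_module (in_inertia G sigma act) alpha psi)
  (HWsimple : twisted_simple (in_inertia G sigma act) psi)
  (Hocc : exists f : 'Hom(W, M),
     twisted_hom (in_inertia G sigma act) psi phi f /\ lker f = 0%VS)
  (w : W) (Hw : w != 0) :
  simple_invariant_submodule G sigma act
    (mult_space (in_inertia G sigma act) psi phi w).
Proof.
split.
- have [f [fhom kerf]] := Hocc; exists (f w); split; first by exists f.
  by apply: contra Hw => /eqP fw0; rewrite -memv0 -kerf memv_ker fw0.
- move=> k _ _ [f1 [f1hom <-]] [f2 [f2hom <-]]; exists (k *: f1 + f2)%VF.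
  split; last by rewrite add_lfunE scale_lfunE.
  by move=> h z GMh; rewrite !add_lfunE !scale_lfunE f1hom // f2hom // linearP.
- move=> a _ inv_a [f [fhom <-]]; exists (act a \o f)%VF.
  split; last by rewrite comp_lfunE.
  exact: (twisted_hom_act Hphi inv_a fhom).
move=> U U_sub U_stable; have [->|U0] := eqVneq U 0%VS; [by left | right].
have [f [fhom fw]] := U_sub _ (memv_pick U).
have fw0 : f w != 0 by rewrite fw vpick0.
have kerf := twisted_hom_lker0 HWsimple fhom fw0.
move=> _ [g [ghom <-]].
have [a [N [inv_a afg]]] :=
  averaged_transport HG Hmod Hsimple Hphi Hphi1 Halpha HW fhom ghom kerf.
have -> : g w = N.+1%:R^-1 *: act a (f w).
  by rewrite -comp_lfunE afg scale_lfunE scalerA mulVf ?scale1r ?Num.Theory.pnatr_eq0.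
by rewrite memvZ // fw U_stable // memv_pick.
Qed.
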